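(* For every indexed grammar $G$ there is a grounded indexed grammar $G'$ such that $L(G') = L(G)$.
   Context: An indexed grammar is a tuple $G=(N,T,F,P,S)$ where $N$ (nonterminals), $T$ (terminals), $F$ (stack symbols) are finite alphabets, $S\in N$ is the start symbol, and $P$ is a finite set of productions of the forms $A\to r$, $A\to Bf$, $Af\to r$ with $A,B\in N$, $f\in F$, $r\in(N\cup T)^*$. Sentential forms are strings over $NF^*\cup T$; in $Af_1\cdots f_k$ the string $f_1\cdots f_k$ is the stack of $A$ with $f_1$ on top. For $r\in(N\cup T)^*$ and $x\in F^*$, $r\{x\}$ denotes $r$ with every $A\in N$ replaced by $Ax$. One writes $q\to r$ if $q=q_1\,Ax\,q_2$ and $r=q_1\,p\{y\}\,q_2$ for some $q_1,q_2\in(NF^*\cup T)^*$, $A\in N$, $x,y\in F^*$, $p\in (N\cup T)^*$, where either (1) $A\to p\in P$ and $y=x$, or (2) $p=B\in N$, $A\to Bf\in P$ and $y=fx$, or (3) $Af\to p\in P$ and $x=fy$. Let $\xrightarrow{*}$ be the reflexive transitive closure; $L(Ax)=\{s\in T^*: Ax\xrightarrow{*}s\}$ and $L(G)=L(S)$ (start symbol with empty stack). $G$ is grounded if there is a symbol $\$\in F$ (bottom-of-stack symbol) such that every production of $P$ has one of the forms $S\to A\$$, $A\to r$, $A\to Bf$, $Af\to r$, $A\$\to s$, with $A,B\in N\setminus\{S\}$, $f\in F\setminus\{\$\}$, $r\in(N\setminus\{S\})^+$, $s\in T^*$. *)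

From mathcomp Require Import all_boot.
Set Implicit Arguments. Unset Strict Implicit. Unset Printing Implicit Defensive.

Fixpoint InL {A : Type} (a : A) (l : seq A) : Prop :=
  match l with [::] => False | b :: m => b = a \/ InL a m end.

Section IndexedGrammar.
Variables (N T F : finType).

(* Productions:  A -> r,   A -> B f,   A f -> r   with r in (N u T)^* *)
Inductive production :=
  | PRule of N & seq (N + T)
  | PPush of N & N & F
  | PPop  of N & F & seq (N + T).

Record indexed_grammar := IndexedGrammar {
  ig_prods : seq production;
  ig_start : N }.

(* sentential-form symbols: A x (nonterminal with stack x, top = head) or a terminal *)
Definition sym := (N * seq F + T)%type.

Definition attach (p : seq (N + T)) (x : seq F) : seq sym :=
  map (fun s => match s with inl B => inl (B, x) | inr t => inr t end) p.

Definition step (G : indexed_grammar) (q r : seq sym) : Prop :=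
  exists (q1 q2 : seq sym) (A : N) (x : seq F),
    q = q1 ++ inl (A, x) :: q2 /\
    ( (exists p, InL (PRule A p) (ig_prods G) /\ r = q1 ++ attach p x ++ q2)
   \/ (exists B f, InL (PPush A B f) (ig_prods G) /\
                   r = q1 ++ inl (B, f :: x) :: q2)
   \/ (exists f y p, InL (PPop A f p) (ig_prods G) /\ x = f :: y /\
                     r = q1 ++ attach p y ++ q2) ).

Inductive derives (G : indexed_grammar) : seq sym -> seq sym -> Prop :=
  | derives_refl q : derives G q q
  | derives_step q r s : step G q r -> derives G r s -> derives G q s.

Definition lang_of (G : indexed_grammar) (A : N) (x : seq F) (w : seq T) : Prop :=
  derives G [:: inl (A, x)] (map (@inr (N * seq F) T) w).

Definition lang (G : indexed_grammar) (w : seq T) : Prop :=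
  lang_of G (ig_start G) [::] w.

Definition nonempty_nonterm_word (S : N) (r : seq (N + T)) : Prop :=
  r <> [::] /\ forall s, InL s r -> exists B, s = inl B /\ B <> S.

Definition terminal_word (r : seq (N + T)) : Prop :=
  forall s, InL s r -> exists t, s = inr t.

Definition grounded (G : indexed_grammar) : Prop :=
  let S := ig_start G in
  exists bot : F, forall pr, InL pr (ig_prods G) ->
       (exists A, pr = PPush S A bot /\ A <> S)
    \/ (exists A r, pr = PRule A r /\ A <> S /\ nonempty_nonterm_word S r)
    \/ (exists A B f, pr = PPush A B f /\ A <> S /\ B <> S /\ f <> bot)
    \/ (exists A f r, pr = PPop A f r /\ A <> S /\ f <> bot /\
                      nonempty_nonterm_word S r)
    \/ (exists A s, pr = PPop A bot s /\ A <> S /\ terminal_word s).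

End IndexedGrammar.

From mathcomp Require Import all_boot.
Set Implicit Arguments. Unset Strict Implicit. Unset Printing Implicit Defensive.

(* A fresh start symbol S' with the single rule S' -> S $ puts the bottom
   symbol $ under every stack.  A terminal t on a right-hand side becomes a
   nonterminal X_t that pops its whole stack and emits t at $, and an empty
   right-hand side becomes a nonterminal E that pops its stack and vanishes at
   $.  Every step of G is simulated by the corresponding step of G' followed by
   draining the new X_t and E; conversely, erasing $, E, reading X_t as t and
   S' as S maps each step of G' either to a step of G or to no change. *)

Section InL.
Variable A : Type.

Lemma InL_cat (x : A) s1 s2 : InL x (s1 ++ s2) <-> InL x s1 \/ InL x s2.
Proof. by elim: s1 => [|b s IH] /=; [tauto | move: IH; tauto]. Qed.

Lemma InL_map_f (B : Type) (f : A -> B) x s : InL x s -> InL (f x) (map f s).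
Proof. by elim: s => [|b s IH] //= [->|/IH]; [left | right]. Qed.

Lemma InL_map_inv (B : Type) (f : A -> B) y s :
  InL y (map f s) -> exists2 x, InL x s & y = f x.
Proof.
elim: s => [|b s IH] //= [<-|/IH [x Hx ->]]; first by exists b; [left|].
by exists x; [right|].
Qed.

Lemma InL_flatten (x : A) s ss : InL s ss -> InL x s -> InL x (flatten ss).
Proof.
elim: ss => [|s' ss IH] //= [->|Hs] Hx; apply/InL_cat; first by left.
by right; apply: IH.
Qed.

Lemma InL_flatten_inv (x : A) ss :
  InL x (flatten ss) -> exists2 s, InL s ss & InL x s.
Proof.
elim: ss => [|s ss IH] //= /InL_cat [Hx|/IH [s' Hs' Hx]]; first by exists s; [left|].
by exists s'; [right|].
Qed.

End InL.

Arguments InL_map_inv {A B f y s}.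
Arguments InL_flatten_inv {A x ss}.

Lemma InL_enum (X : finType) (x : X) : InL x (enum X).
Proof.
have : x \in enum X by rewrite mem_enum.
by elim: (enum X) => [|b s IH] //=; rewrite inE => /orP [/eqP ->|/IH]; [left|right].
Qed.

Section Derivations.
Variables (N T F : finType) (G : indexed_grammar N T F).
Local Notation P := (ig_prods G).

Lemma derives_trans q r s : derives G q r -> derives G r s -> derives G q s.
Proof. by elim=> [//|q0 r0 s0 Hstep _ IH] /IH; apply: derives_step. Qed.

Lemma step_rule q1 q2 A x p :
  InL (PRule F A p) P -> step G (q1 ++ inl (A, x) :: q2) (q1 ++ attach p x ++ q2).
Proof. by move=> Hp; exists q1, q2, A, x; split=> //; left; exists p. Qed.

Lemma step_push q1 q2 A B f x :
  InL (PPush T A B f) P -> step G (q1 ++ inl (A, x) :: q2) (q1 ++ inl (B, f :: x) :: q2).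
Proof. by move=> Hp; exists q1, q2, A, x; split=> //; right; left; exists B, f. Qed.

Lemma step_pop q1 q2 A f y p :
  InL (PPop A f p) P -> step G (q1 ++ inl (A, f :: y) :: q2) (q1 ++ attach p y ++ q2).
Proof.
by move=> Hp; exists q1, q2, A, (f :: y); split=> //; right; right; exists f, y, p.
Qed.

Lemma step_ctx l m q r : step G q r -> step G (l ++ q ++ m) (l ++ r ++ m).
Proof.
case=> q1 [q2 [A [x [-> Hr]]]]; rewrite -!catA /=.
case: Hr => [[p [Hp ->]]|[[B [f [Hp ->]]]|[f [y [p [Hp [-> ->]]]]]]].
- by have := step_rule (l ++ q1) (q2 ++ m) x Hp; rewrite -!catA.
- by have := step_push (l ++ q1) (q2 ++ m) x Hp; rewrite -!catA.
- by have := step_pop (l ++ q1) (q2 ++ m) y Hp; rewrite -!catA.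
Qed.

Lemma derives_ctx l m q r : derives G q r -> derives G (l ++ q ++ m) (l ++ r ++ m).
Proof.
elim=> [q0|q0 r0 s0 Hstep _ IH]; first exact: derives_refl.
exact: derives_step (step_ctx l m Hstep) IH.
Qed.

Lemma derives_cat q1 r1 q2 r2 :
  derives G q1 r1 -> derives G q2 r2 -> derives G (q1 ++ q2) (r1 ++ r2).
Proof.
move=> H1 H2; apply: (@derives_trans _ (r1 ++ q2)).
  by have := derives_ctx [::] q2 H1.
by have := derives_ctx r1 [::] H2; rewrite !cats0.
Qed.

Lemma derives_drain Z bot s x :
  InL (PPop Z bot s) P -> (forall f, InL f x -> InL (PPop Z f [:: inl Z]) P) ->
  derives G [:: inl (Z, x ++ [:: bot])] (attach s [::]).
Proof.
move=> Hbot; elim: x => [|f x IH] Hx /=.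
  apply: derives_step (derives_refl _ _).
  by have := step_pop [::] [::] [::] Hbot; rewrite cats0.
apply: derives_step (IH (fun g Hg => Hx g (or_intror Hg))).
by have := step_pop [::] [::] (x ++ [:: bot]) (Hx f (or_introl erefl)).
Qed.

End Derivations.

Section Grounding.
Variables (N T F : finType) (G : indexed_grammar N T F).
Local Notation S := (ig_start G).
Local Notation N' := (N + option T + unit)%type.
Local Notation F' := (option F).

(* The bottom symbol $ is [None : option F]. *)
Definition ntOld (A : N) : N' := inl (inl A).
Definition ntTerm (t : T) : N' := inl (inr (Some t)).
Definition ntEps : N' := inl (inr None).
Definition ntStart : N' := inr tt.

Definition ground_sym (s : N + T) : N' + T :=
  match s with inl B => inl (ntOld B) | inr t => inl (ntTerm t) end.

Definition ground_rhs (p : seq (N + T)) : seq (N' + T) :=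
  if p is [::] then [:: inl ntEps] else map ground_sym p.

Definition ground_prod (pr : production N T F) : production N' T F' :=
  match pr with
  | PRule A p => PRule F' (ntOld A) (ground_rhs p)
  | PPush A B f => PPush T (ntOld A) (ntOld B) (Some f)
  | PPop A f p => PPop (ntOld A) (Some f) (ground_rhs p)
  end.

Definition drain_prods (Z : N') (s : seq (N' + T)) : seq (production N' T F') :=
  PPop Z None s :: [seq PPop Z (Some f) [:: inl Z] | f <- enum F].

Definition drainers : seq (N' * seq (N' + T)) :=
  (ntEps, [::]) :: [seq (ntTerm t, [:: inr t]) | t <- enum T].

Definition start_prod : production N' T F' := PPush T ntStart (ntOld S) None.

Definition grounded_prods : seq (production N' T F') :=
  start_prod :: map ground_prod (ig_prods G)
    ++ flatten [seq drain_prods Zs.1 Zs.2 | Zs <- drainers].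

Definition groundG : indexed_grammar N' T F' := IndexedGrammar grounded_prods ntStart.

Lemma drainersP Z s : InL (Z, s) drainers ->
  (Z = ntEps /\ s = [::]) \/ exists t, Z = ntTerm t /\ s = [:: inr t].
Proof.
case=> [[<- <-]|]; first by left.
by case/InL_map_inv=> t _ [-> ->]; right; exists t.
Qed.

Lemma drain_prodsP Z s pr : InL pr (drain_prods Z s) ->
  pr = PPop Z None s \/ exists f, pr = PPop Z (Some f) [:: inl Z].
Proof. by case=> [<-|/InL_map_inv [f _ ->]]; [left | right; exists f]. Qed.

Lemma grounded_prodsP pr : InL pr grounded_prods ->
  [\/ pr = start_prod,
      exists2 pr0, InL pr0 (ig_prods G) & pr = ground_prod pr0
    | exists Z s, InL (Z, s) drainers /\ InL pr (drain_prods Z s)].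
Proof.
case=> [<-|/InL_cat [Hground|Hdrain]]; first exact: Or31.
  by case/InL_map_inv: Hground => pr0 H0 ->; apply: Or32; exists pr0.
case/InL_flatten_inv: Hdrain => ps /InL_map_inv [[Z s] HZs ->] Hpr.
by apply: Or33; exists Z, s.
Qed.

Lemma nonterm_ground_rhs p : nonempty_nonterm_word ntStart (ground_rhs p).
Proof.
case: p => [|a p]; first by split=> // s [<-|//]; exists ntEps.
split=> // s /(InL_map_inv (s := a :: p)) [[B|t] _ ->]; first by exists (ntOld B).
by exists (ntTerm t).
Qed.

Lemma groundG_grounded : grounded groundG.
Proof.
exists None => pr /grounded_prodsP [->|[pr0 _ ->]|[Z [s [/drainersP HZs Hpr]]]].
- by left; exists (ntOld S).
- case: pr0 => [A p|A B f|A f p] /=; right.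
  + by left; exists (ntOld A), (ground_rhs p); split; [|split; [|exact: nonterm_ground_rhs]].
  + by right; left; exists (ntOld A), (ntOld B), (Some f).
  + right; right; left; exists (ntOld A), (Some f), (ground_rhs p).
    by split; [|split; [|split; [|exact: nonterm_ground_rhs]]].
- have HZ : Z <> ntStart by case: HZs => [[-> _]|[t [-> _]]].
  case: (drain_prodsP Hpr) => [->|[f ->]]; do 3 right.
  + right; exists Z, s; split=> //; split=> // x.
    by case: HZs => [[_ ->]|[t [_ ->]]] // [<-|//]; exists t.
  + left; exists Z, (Some f), [:: inl Z]; do 3 (split=> //).
    by split=> // x [<-|//]; exists Z.
Qed.

Lemma drain_prods_grounded Z s pr :
  InL (Z, s) drainers -> InL pr (drain_prods Z s) -> InL pr grounded_prods.
Proof.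
move=> HZs Hpr; right; apply/InL_cat; right.
exact: InL_flatten (InL_map_f (fun Zs => drain_prods Zs.1 Zs.2) HZs) Hpr.
Qed.

Lemma ground_prod_grounded pr : InL pr (ig_prods G) -> InL (ground_prod pr) grounded_prods.
Proof. by move=> Hpr; right; apply/InL_cat; left; apply: InL_map_f. Qed.

Lemma drainers_term t : InL (ntTerm t, [:: inr t]) drainers.
Proof. by right; apply: (InL_map_f (fun t => (ntTerm t, [:: inr t]))); apply: InL_enum. Qed.

Definition lift_stack (x : seq F) : seq F' := map Some x ++ [:: None].

Definition lift_sym (s : sym N T F) : sym N' T F' :=
  match s with
  | inl (A, x) => inl (ntOld A, lift_stack x)
  | inr t => inr t
  end.

Lemma derives_drain_grounded Z s x : InL (Z, s) drainers ->
  derives groundG [:: inl (Z, lift_stack x)] (attach s [::]).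
Proof.
move=> HZs; apply: derives_drain; first by apply: (drain_prods_grounded HZs); left.
move=> _ /InL_map_inv [f _ ->]; apply: (drain_prods_grounded HZs); right.
by apply: (InL_map_f (fun f => PPop Z (Some f) [:: inl Z])); apply: InL_enum.
Qed.

Lemma derives_ground_rhs p x :
  derives groundG (attach (ground_rhs p) (lift_stack x)) (map lift_sym (attach p x)).
Proof.
case: p => [|a p]; first by apply: (derives_drain_grounded x (s := [::])); left.
rewrite /ground_rhs; elim: (a :: p) => [|[B|t] r IH] /=; first exact: derives_refl.
  exact: (derives_cat (derives_refl _ [:: inl (ntOld B, lift_stack x)]) IH).
exact: derives_cat (derives_drain_grounded x (drainers_term t)) IH.
Qed.

Lemma lift_word (w : seq T) : map lift_sym (map inr w) = map inr w.
Proof. by elim: w => //= t w ->. Qed.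

Lemma derives_lift q r : derives G q r -> derives groundG (map lift_sym q) (map lift_sym r).
Proof.
elim=> [q0|q0 r0 s0 [q1 [q2 [A [x [-> Hr]]]]] _ IH]; first exact: derives_refl.
apply: derives_trans IH; rewrite map_cat /=.
case: Hr => [[p [/ground_prod_grounded Hp ->]]|[[B [f [/ground_prod_grounded Hp ->]]]|
              [f [y [p [/ground_prod_grounded Hp [-> ->]]]]]]]; rewrite !map_cat.
- apply: derives_step (step_rule (G := groundG) _ _ (lift_stack x) Hp) _.
  exact: derives_ctx (derives_ground_rhs p x).
- exact: derives_step (step_push (G := groundG) _ _ (lift_stack x) Hp) (derives_refl _ _).
- apply: derives_step (step_pop (G := groundG) _ _ (lift_stack y) Hp) _.
  exact: derives_ctx (derives_ground_rhs p y).
Qed.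

Definition unlift_stack (y : seq F') : seq F := pmap id y.

Definition unlift_sym (s : sym N' T F') : seq (sym N T F) :=
  match s with
  | inl (inl (inl A), y) => [:: inl (A, unlift_stack y)]
  | inl (inl (inr (Some t)), _) => [:: inr t]
  | inl (inl (inr None), _) => [::]
  | inl (inr tt, y) => [:: inl (S, unlift_stack y)]
  | inr t => [:: inr t]
  end.

Definition unlift (q : seq (sym N' T F')) : seq (sym N T F) := flatten (map unlift_sym q).

Lemma unlift_cat q r : unlift (q ++ r) = unlift q ++ unlift r.
Proof. by rewrite /unlift map_cat flatten_cat. Qed.

Lemma unlift_ground_rhs p y : unlift (attach (ground_rhs p) y) = attach p (unlift_stack y).
Proof.
case: p => [|a p] //; rewrite /ground_rhs.
by elim: (a :: p) => [|[B|t] r IH] //=; rewrite -IH.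
Qed.

Lemma unlift_drainer Z s y y' :
  InL (Z, s) drainers -> unlift [:: inl (Z, y)] = unlift (attach s y').
Proof. by case/drainersP=> [[-> ->]|[t [-> ->]]]. Qed.

Lemma unlift_word (w : seq T) : unlift (map inr w) = map inr w.
Proof. by elim: w => //= t w; rewrite -cat1s unlift_cat => ->. Qed.

Lemma step_unlift q r :
  step groundG q r -> unlift q = unlift r \/ step G (unlift q) (unlift r).
Proof.
case=> q1 [q2 [A [x [-> Hr]]]]; rewrite !unlift_cat /=.
case: Hr => [[p [/grounded_prodsP Hp ->]]|[[B [f [/grounded_prodsP Hp ->]]]|
              [f [y [p [/grounded_prodsP Hp [-> ->]]]]]]];
  case: Hp => [|[pr0 H0]|[Z [s [HZs /drain_prodsP Hpr]]]]; rewrite ?unlift_cat.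
- by [].
- case: pr0 H0 => //= A0 p0 H0 [-> ->].
  by right; rewrite unlift_ground_rhs; apply: step_rule.
- by case: Hpr => [|[]].
- by case=> -> -> ->; left.
- case: pr0 H0 => //= A0 B0 f0 H0 [-> -> ->].
  by right; apply: step_push.
- by case: Hpr => [|[]].
- by [].
- case: pr0 H0 => //= A0 f0 p0 H0 [-> -> ->].
  by right; rewrite unlift_ground_rhs; apply: step_pop.
- left; rewrite -cat1s !unlift_cat.
  case: Hpr => [[-> _ ->]|[_ [-> _ ->]]]; first by rewrite (unlift_drainer _ y HZs).
  by rewrite /= !(unlift_drainer _ y HZs).
Qed.

Lemma derives_unlift q r : derives groundG q r -> derives G (unlift q) (unlift r).
Proof.
elim=> [q0|q0 r0 s0 /step_unlift [->|Hstep] _ IH] //; first exact: derives_refl.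
exact: derives_step Hstep IH.
Qed.

Lemma lang_groundG w : lang groundG w <-> lang G w.
Proof.
split=> [/derives_unlift | /derives_lift]; first by rewrite unlift_word.
rewrite lift_word; apply: derives_step.
exact: (step_push (G := groundG) [::] [::] [::] (or_introl erefl)).
Qed.

End Grounding.

Theorem proposition1 (N T F : finType) (G : indexed_grammar N T F) :
  exists (N' F' : finType) (G' : indexed_grammar N' T F'),
    grounded G' /\ forall w : seq T, lang G' w <-> lang G w.
Proof.
exists (N + option T + unit)%type, (option F), (groundG G).
by split; [exact: groundG_grounded | exact: lang_groundG].
Qed.
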